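(* Let $I\subset\mathbb R$ be an interval and $\alpha\in C^\infty(I,C^\infty(\mathbb S))$ a real-valued solution of $\frac{\partial\alpha_\tau}{\partial\tau}=-\alpha_\tau(\Lambda\alpha_\tau)+(\mathcal H\alpha_\tau)(D\alpha_\tau)$ on $I$. Then $$\frac{\partial}{\partial\tau}\int_0^{2\pi}\alpha_\tau\,d\theta=-4\langle\alpha_{\tau,+},\Lambda\alpha_{\tau,+}\rangle\le0\quad(\tau\in I),$$ so $\int_0^{2\pi}\alpha_\tau d\theta$ is non-increasing in $\tau$; and if this derivative vanishes at some $\tau\in I$, then $\alpha_\tau$ is a constant function.
   Context: $\langle u,v\rangle=\int_0^{2\pi}u\bar v\,d\theta$; $u=\sum\hat u_ke^{ik\theta}$. $D=-i\,d/d\theta$, $\Lambda e^{in\theta}=|n|e^{in\theta}$, $\mathcal H\mathbf 1=0$, $\mathcal He^{in\theta}=\mathrm{sgn}(n)e^{in\theta}$ ($n\ne0$). For real $b$, $b_+=\hat b_0/2+\sum_{k\ge1}\hat b_ke^{ik\theta}$, and $\alpha_{\tau,+}=(\alpha_\tau)_+$. *)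

From Stdlib Require Import Reals ZArith.
From Coquelicot Require Import Coquelicot.

Open Scope R_scope.

Definition CInt (f : R -> C) (a b : R) : C :=
  (RInt (fun x => Re (f x)) a b, RInt (fun x => Im (f x)) a b).

(** Sum of a complex series (defined componentwise; meaningful when it converges). *)
Definition CSeries (s : nat -> C) : C :=
  (Series (fun n => Re (s n)), Series (fun n => Im (s n))).

Definition cexpi (x : R) : C := (cos x, sin x).

Definition CDerive (u : R -> C) (x : R) : C :=
  (Derive (fun t => Re (u t)) x, Derive (fun t => Im (u t)) x).

Definition fcoef (u : R -> C) (k : Z) : C :=
  Cmult (RtoC (/ (2 * PI))) (CInt (fun th => Cmult (u th) (cexpi (- IZR k * th))) 0 (2 * PI)).

Definition inner (u v : R -> C) : C :=
  CInt (fun th => Cmult (u th) (Cconj (v th))) 0 (2 * PI).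

Definition Dop (u : R -> C) (th : R) : C :=
  Cmult (0, -1) (CDerive u th).

(** Lambda e^{in theta} = |n| e^{in theta}:
    Lambda u = sum_{n>=0} n (uhat_n e^{in theta} + uhat_{-n} e^{-in theta}). *)
Definition Lam (u : R -> C) (th : R) : C :=
  CSeries (fun n => Cmult (RtoC (INR n))
    (Cplus (Cmult (fcoef u (Z.of_nat n)) (cexpi (INR n * th)))
           (Cmult (fcoef u (- Z.of_nat n)) (cexpi (- INR n * th))))).

(** Hilbert-type operator: H 1 = 0, H e^{in theta} = sgn(n) e^{in theta}:
    H u = sum_{n>=0} (uhat_n e^{in theta} - uhat_{-n} e^{-in theta})  (n = 0 term vanishes). *)
Definition Hil (u : R -> C) (th : R) : C :=
  CSeries (fun n =>
    Cminus (Cmult (fcoef u (Z.of_nat n)) (cexpi (INR n * th)))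
           (Cmult (fcoef u (- Z.of_nat n)) (cexpi (- INR n * th)))).

Definition pos_part (u : R -> C) (th : R) : C :=
  Cplus (Cmult (fcoef u 0%Z) (RtoC (/ 2)))
        (CSeries (fun n => Cmult (fcoef u (Z.of_nat (S n))) (cexpi (INR (S n) * th)))).

Definition toC (u : R -> R) : R -> C := fun th => RtoC (u th).

Definition is_interval (I : R -> Prop) : Prop :=
  forall x y z, I x -> I z -> x <= y <= z -> I y.

Definition continuous2_at (f : R -> R -> R) (x y : R) : Prop :=
  filterlim (fun p : R * R => f (fst p) (snd p)) (locally (x, y)) (locally (f x y)).

(** C^k on the open set J x R (first variable tau in J, second variable theta in R):
    continuous, with first-order partials that are themselves C^{k-1}. *)
Fixpoint Ck_on (J : R -> Prop) (k : nat) (f : R -> R -> R) : Prop :=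
  match k with
  | O => forall x y, J x -> continuous2_at f x y
  | S k' =>
      (forall x y, J x -> continuous2_at f x y) /\
      exists fx fy : R -> R -> R,
        (forall x y, J x -> is_derive (fun t => f t y) x (fx x y)) /\
        (forall x y, J x -> is_derive (fun t => f x t) y (fy x y)) /\
        Ck_on J k' fx /\ Ck_on J k' fy
  end.

Definition smooth_on (J : R -> Prop) (f : R -> R -> R) : Prop :=
  forall k, Ck_on J k f.

From Stdlib Require Import Reals ZArith Lra Lia.
From Coquelicot Require Import Coquelicot.
Open Scope R_scope.

(** We write a real [2π]-periodic profile [a] through its real Fourier
    coefficients [A_n = (1/2π)∫ a cos nθ], [B_n = (1/2π)∫ a sin nθ], so that
    [â_{±n} = A_n ∓ i B_n]. For a C³ profile, three integrations by parts give
    [|A_n| + |B_n| = O(n⁻³)]; hence [Λa = 2Σ n(A_n cos nθ + B_n sin nθ)],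
    [Im(Ha) = 2Σ (A_n sin nθ - B_n cos nθ)], [a_+] and [Λa_+] are absolutely
    convergent trigonometric series, which may be integrated term by term.
    Orthogonality then gives, with [S(a) = Σ n (A_n² + B_n²) ≥ 0],
      [∫ Re(-aΛa + (Ha)(Da)) = -8π S(a)]   and   [⟨a_+, Λa_+⟩ = 2π S(a)].
    Differentiating under the integral sign, [d/dτ ∫α_τ = -8π S(α_τ)], which is
    [-4⟨α_{τ,+}, Λα_{τ,+}⟩ ≤ 0]; the mean value theorem gives monotonicity.
    If [S(α_τ) = 0] all non-constant coefficients vanish, and a continuous
    periodic function with this property is constant (uniqueness of Fourier
    coefficients, proved with the concentrating kernels [(1 + cos(θ - θ₀))^k]). *)

(** Real-valued instances of Coquelicot's integration rules, stated with the
    field operations of [R] so that they apply without unfolding [plus]/[scal]. *)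
Lemma is_RInt_Rplus (f g : R -> R) a b (If Ig : R) :
  is_RInt f a b If -> is_RInt g a b Ig -> is_RInt (fun x => f x + g x) a b (If + Ig).
Proof. exact (@is_RInt_plus R_NormedModule f g a b If Ig). Qed.

Lemma is_RInt_Rminus (f g : R -> R) a b (If Ig : R) :
  is_RInt f a b If -> is_RInt g a b Ig -> is_RInt (fun x => f x - g x) a b (If - Ig).
Proof. exact (@is_RInt_minus R_NormedModule f g a b If Ig). Qed.

Lemma is_RInt_Rscal (f : R -> R) a b k (If : R) :
  is_RInt f a b If -> is_RInt (fun x => k * f x) a b (k * If).
Proof. exact (@is_RInt_scal R_NormedModule f a b k If). Qed.

Lemma is_RInt_Ropp (f : R -> R) a b (If : R) :
  is_RInt f a b If -> is_RInt (fun x => - f x) a b (- If).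
Proof. exact (@is_RInt_opp R_NormedModule f a b If). Qed.

Lemma is_RInt_Rconst a b (c : R) : is_RInt (fun _ => c) a b ((b - a) * c).
Proof. exact (@is_RInt_const R_NormedModule a b c). Qed.

Lemma is_RInt_fun_eq (f g : R -> R) a b (l : R) :
  (forall x, f x = g x) -> is_RInt f a b l -> is_RInt g a b l.
Proof. intros H; apply is_RInt_ext; auto. Qed.

Lemma is_RInt_val_eq (f : R -> R) a b (l l' : R) : l = l' -> is_RInt f a b l -> is_RInt f a b l'.
Proof. intros ->; auto. Qed.

Lemma continuous_Rmult (f g : R -> R) x :
  continuous f x -> continuous g x -> continuous (fun y => f y * g y) x.
Proof. exact (@continuous_mult R_UniformSpace R_AbsRing f g x). Qed.

Lemma continuous_Rplus (f g : R -> R) x :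
  continuous f x -> continuous g x -> continuous (fun y => f y + g y) x.
Proof. exact (@continuous_plus R_UniformSpace R_AbsRing R_NormedModule f g x). Qed.

Lemma continuous_cos_mul (n : nat) x : continuous (fun y => cos (INR n * y)) x.
Proof. apply (ex_derive_continuous (fun y => cos (INR n * y))). auto_derive; auto. Qed.

Lemma continuous_sin_mul (n : nat) x : continuous (fun y => sin (INR n * y)) x.
Proof. apply (ex_derive_continuous (fun y => sin (INR n * y))). auto_derive; auto. Qed.

Lemma continuous_is_RInt (f : R -> R) a b :
  (forall x, continuous f x) -> is_RInt f a b (RInt f a b).
Proof.
  intros H. apply (@RInt_correct R_CompleteNormedModule).
  apply (@ex_RInt_continuous R_CompleteNormedModule); auto.
Qed.

Lemma continuous_ex_RInt (f : R -> R) a b : (forall x, continuous f x) -> ex_RInt f a b.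
Proof. intros H. eexists. apply continuous_is_RInt, H. Qed.

Lemma continuous_bounded (f : R -> R) a b : a <= b -> (forall x, continuous f x) ->
  exists M, forall x, a <= x <= b -> Rabs (f x) <= M.
Proof.
  intros Hab Hc.
  destruct (continuity_ab_maj (fun x => Rabs (f x)) a b Hab) as [Mx [HM _]].
  - intros c _. apply continuity_pt_filterlim.
    apply (continuous_comp f Rabs); [apply Hc | apply continuous_Rabs].
  - exists (Rabs (f Mx)); auto.
Qed.

Lemma RInt_lower_bound (f : R -> R) a b m : a <= b -> (forall x, continuous f x) ->
  (forall x, a <= x <= b -> m <= f x) -> (b - a) * m <= RInt f a b.
Proof.
  intros Hab Hc Hm.
  replace ((b - a) * m) with (RInt (fun _ => m) a b) by (rewrite RInt_const; reflexivity).
  apply RInt_le; auto.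
  - apply continuous_ex_RInt; intros; apply continuous_const.
  - apply continuous_ex_RInt; auto.
  - intros x Hx; apply Hm; lra.
Qed.

Lemma RInt_Chasles_continuous (f : R -> R) a b c : (forall x, continuous f x) ->
  RInt f a c = RInt f a b + RInt f b c.
Proof.
  intros H. symmetry. apply (@RInt_Chasles R_CompleteNormedModule); apply continuous_ex_RInt; auto.
Qed.

Lemma Series_zero : Series (fun _ => 0) = 0.
Proof.
  apply is_series_unique. apply (filterlim_ext (fun _ => 0)).
  - intros N; induction N.
    + rewrite sum_O; auto.
    + rewrite sum_Sn, <- IHN. simpl. unfold plus; simpl; lra.
  - apply filterlim_const.
Qed.

Lemma Series_nonneg (u : nat -> R) : (forall n, 0 <= u n) -> ex_series u -> 0 <= Series u.
Proof.
  intros Hp He. rewrite <- Series_zero. apply Series_le; auto. intros; split; [lra|auto].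
Qed.

Lemma Series_nonneg_eq0 (u : nat -> R) :
  (forall n, 0 <= u n) -> ex_series u -> Series u = 0 -> forall n, u n = 0.
Proof.
  intros Hp He Hs n.
  assert (Hle : sum_f_R0 u n <= Series u).
  { rewrite (Series_incr_n u (S n)) by (auto; lia). simpl pred.
    assert (0 <= Series (fun k => u (S n + k)%nat)).
    { apply Series_nonneg; auto. apply ex_series_incr_n; auto. }
    lra. }
  assert (Hterm : u n <= sum_f_R0 u n).
  { destruct n; simpl; [lra|]. pose proof (cond_pos_sum u n Hp). lra. }
  specialize (Hp n). lra.
Qed.

Lemma sum_n_delta (p : nat) (x : R) (N : nat) :
  sum_n (fun m => if Nat.eqb m p then x else 0) N = if Nat.leb p N then x else 0.
Proof.
  induction N.
  - rewrite sum_O. destruct p; simpl; auto.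
  - rewrite sum_Sn, IHN. change (plus ?a ?b) with (a + b).
    destruct (Nat.eqb_spec (S N) p); destruct (Nat.leb_spec p N);
    destruct (Nat.leb_spec p (S N)); try lia; simpl; lra.
Qed.

Lemma Series_delta (p : nat) (x : R) : Series (fun m => if Nat.eqb m p then x else 0) = x.
Proof.
  apply is_series_unique. apply (filterlim_ext_loc (fun _ => x)); [|apply filterlim_const].
  exists p. intros N HN. rewrite sum_n_delta. destruct (Nat.leb_spec p N); auto; lia.
Qed.

Lemma Series_abs_bound (g M : nat -> R) :
  (forall n, Rabs (g n) <= M n) -> ex_series M -> Rabs (Series g) <= Series M.
Proof.
  intros Hb HM. eapply Rle_trans; [apply Series_Rabs|].
  - apply (@ex_series_le R_AbsRing R_CompleteNormedModule _ M); auto.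
    intros n; change (Rabs (Rabs (g n)) <= M n). rewrite Rabs_Rabsolu; auto.
  - apply Series_le; auto. intros n; split; auto using Rabs_pos.
Qed.

(** [Σ 1/((k+1)(k+2))] converges (it telescopes); used to sum [O(n⁻²)] terms. *)
Lemma ex_series_telescope : ex_series (fun k => / ((INR k + 1) * (INR k + 2))).
Proof.
  exists 1. apply (filterlim_ext (fun N => 1 - / (INR N + 2))).
  - intros N. induction N.
    + rewrite sum_O. simpl. field.
    + rewrite sum_Sn, <- IHN. change (plus ?a ?b) with (a + b). rewrite S_INR.
      assert (0 <= INR N) by apply pos_INR. field. lra.
  - change (is_lim_seq (fun N => 1 - / (INR N + 2)) 1).
    replace (Finite 1) with (Rbar_minus 1 0) by (simpl; f_equal; ring).
    apply is_lim_seq_minus'; [apply is_lim_seq_const|].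
    replace (Finite 0) with (Rbar_inv p_infty) by auto.
    apply is_lim_seq_inv; [|discriminate].
    apply (is_lim_seq_plus _ _ p_infty 2 p_infty).
    + apply is_lim_seq_INR.
    + apply is_lim_seq_const.
    + unfold is_Rbar_plus; simpl; auto.
Qed.

Lemma Series_tail_dominated (f M : nat -> R) (N : nat) :
  (forall n, Rabs (f n) <= M n) -> ex_series M ->
  Rabs (Series f - sum_n f N) <= Series M - sum_n M N.
Proof.
  intros Hb HM.
  assert (Hf : ex_series f) by (apply (@ex_series_le R_AbsRing R_CompleteNormedModule f M); auto).
  rewrite !sum_n_Reals.
  rewrite (Series_incr_n f (S N)), (Series_incr_n M (S N)) by (auto; lia). simpl pred.
  replace (sum_f_R0 f N + Series (fun k => f (S N + k)%nat) - sum_f_R0 f N)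
    with (Series (fun k => f (S N + k)%nat)) by ring.
  replace (sum_f_R0 M N + Series (fun k => M (S N + k)%nat) - sum_f_R0 M N)
    with (Series (fun k => M (S N + k)%nat)) by ring.
  apply Series_abs_bound; auto. apply ex_series_incr_n; auto.
Qed.

Lemma is_RInt_Series_global (f : nat -> R -> R) (M I : nat -> R) (a b : R) :
  (forall n, is_RInt (f n) a b (I n)) -> (forall n x, Rabs (f n x) <= M n) -> ex_series M ->
  is_RInt (fun x => Series (fun n => f n x)) a b (Series I) /\ ex_series I.
Proof.
  intros HI Hb HM.
  set (G := fun (N : nat) (x : R) => sum_n (fun n => f n x) N).
  assert (HG : forall N, is_RInt (G N) a b (sum_n I N)).
  { induction N.
    - apply (is_RInt_fun_eq (f 0%nat)); [intros; unfold G; rewrite sum_O; auto|].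
      rewrite sum_O; auto.
    - apply (is_RInt_fun_eq (fun x => plus (G N x) (f (S N) x))).
      + intros; unfold G; rewrite sum_Sn; auto.
      + rewrite sum_Sn. apply (@is_RInt_plus R_NormedModule); auto. }
  assert (Hunif : filterlim G eventually
     (@locally (fct_UniformSpace R R_UniformSpace) (fun x => Series (fun n => f n x)))).
  { apply <- (@filterlim_locally _ _ eventually _ G). intros eps.
    pose proof (proj1 (@filterlim_locally _ _ eventually _ (sum_n M) _) (Series_correct _ HM) eps)
      as [N0 HN0].
    exists N0. intros N HN t. specialize (HN0 N HN).
    change (Rabs (G N t - Series (fun n => f n t)) < eps).
    change (Rabs (sum_n M N - Series M) < eps) in HN0.
    unfold G. rewrite Rabs_minus_sym. rewrite Rabs_minus_sym in HN0.
    eapply Rle_lt_trans; [apply Series_tail_dominated; auto|].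
    eapply Rle_lt_trans; [apply Rle_abs|exact HN0]. }
  destruct (filterlim_RInt G a b eventually _ _ (sum_n I) HG Hunif) as [If [Hl Hi]].
  rewrite (is_series_unique I If Hl). split; [auto | exists If; exact Hl].
Qed.

Lemma is_RInt_Series (f : nat -> R -> R) (M I : nat -> R) (a b : R) :
  a <= b -> (forall n, is_RInt (f n) a b (I n)) ->
  (forall n x, a <= x <= b -> Rabs (f n x) <= M n) -> ex_series M ->
  is_RInt (fun x => Series (fun n => f n x)) a b (Series I) /\ ex_series I.
Proof.
  intros Hab HI Hb HM.
  set (clamp := fun x => Rmax a (Rmin b x)).
  assert (Hcl : forall x, a <= clamp x <= b).
  { intros x; unfold clamp. split; [apply Rmax_l|]. apply Rmax_lub; [lra|apply Rmin_l]. }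
  assert (Hin : forall x, Rmin a b < x < Rmax a b -> clamp x = x).
  { intros x Hx. rewrite Rmin_left, Rmax_right in Hx by lra. unfold clamp.
    rewrite Rmin_right, Rmax_right; lra. }
  destruct (is_RInt_Series_global (fun n x => f n (clamp x)) M I a b) as [H1 H2]; auto.
  - intros n. apply (is_RInt_ext (f n)); auto. intros x Hx; rewrite Hin; auto.
  - split; auto. apply (is_RInt_ext (fun x => Series (fun n => f n (clamp x)))); auto.
    intros x Hx; rewrite Hin; auto.
Qed.

Lemma sin_2PI_Z (z : Z) : sin (IZR z * (2 * PI)) = 0.
Proof. apply sin_eq_0_1. exists (2 * z)%Z. rewrite mult_IZR. simpl. ring. Qed.

Lemma cos_2PI_Z (z : Z) : cos (IZR z * (2 * PI)) = 1.
Proof.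
  replace (IZR z * (2 * PI)) with (2 * (IZR z * PI)) by ring.
  rewrite cos_2a_sin, sin_eq_0_1; [ring | exists z; auto].
Qed.

Lemma is_RInt_cos_Z (z : Z) :
  is_RInt (fun x => cos (IZR z * x)) 0 (2 * PI) (if Z.eqb z 0 then 2 * PI else 0).
Proof.
  destruct (Z.eqb_spec z 0) as [->|Hz]; cbv iota.
  - apply (is_RInt_fun_eq (fun _ => 1)); [intros; rewrite Rmult_0_l, cos_0; auto|].
    apply (is_RInt_val_eq _ _ _ ((2 * PI - 0) * 1)); [ring | apply is_RInt_Rconst].
  - assert (Hr : IZR z <> 0) by (apply not_0_IZR; auto).
    apply (is_RInt_val_eq _ _ _ (sin (IZR z * (2 * PI)) / IZR z - sin (IZR z * 0) / IZR z)).
    { rewrite sin_2PI_Z, Rmult_0_r, sin_0. field; auto. }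
    apply (is_RInt_derive (fun x => sin (IZR z * x) / IZR z)).
    + intros x _. auto_derive; auto. field; auto.
    + intros x _. apply (ex_derive_continuous (fun x => cos (IZR z * x))). auto_derive; auto.
Qed.

Lemma is_RInt_sin_Z (z : Z) : is_RInt (fun x => sin (IZR z * x)) 0 (2 * PI) 0.
Proof.
  destruct (Z.eqb_spec z 0) as [->|Hz].
  - apply (is_RInt_fun_eq (fun _ => 0)); [intros; rewrite Rmult_0_l, sin_0; auto|].
    apply (is_RInt_val_eq _ _ _ ((2 * PI - 0) * 0)); [ring | apply is_RInt_Rconst].
  - assert (Hr : IZR z <> 0) by (apply not_0_IZR; auto).
    apply (is_RInt_val_eq _ _ _ (- cos (IZR z * (2 * PI)) / IZR z - - cos (IZR z * 0) / IZR z)).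
    { rewrite cos_2PI_Z, Rmult_0_r, cos_0. field; auto. }
    apply (is_RInt_derive (fun x => - cos (IZR z * x) / IZR z)).
    + intros x _. auto_derive; auto. field; auto.
    + intros x _. apply (ex_derive_continuous (fun x => sin (IZR z * x))). auto_derive; auto.
Qed.

Lemma IZR_of_nat_sub_mul j k x : IZR (Z.of_nat j - Z.of_nat k) * x = INR j * x - INR k * x.
Proof. rewrite minus_IZR, <- !INR_IZR_INZ. ring. Qed.

Lemma IZR_of_nat_add_mul j k x : IZR (Z.of_nat j + Z.of_nat k) * x = INR j * x + INR k * x.
Proof. rewrite plus_IZR, <- !INR_IZR_INZ. ring. Qed.

Lemma Z_of_nat_sub_eqb (j k : nat) : Z.eqb (Z.of_nat j - Z.of_nat k) 0 = Nat.eqb j k.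
Proof. destruct (Z.eqb_spec (Z.of_nat j - Z.of_nat k) 0); destruct (Nat.eqb_spec j k); auto; lia. Qed.

Lemma Z_of_nat_add_eqb (j k : nat) : Z.eqb (Z.of_nat j + Z.of_nat k) 0 = Nat.eqb (j + k) 0.
Proof. destruct (Z.eqb_spec (Z.of_nat j + Z.of_nat k) 0); destruct (Nat.eqb_spec (j + k) 0); auto; lia. Qed.

Lemma is_RInt_cos_cos (j k : nat) :
  is_RInt (fun x => cos (INR j * x) * cos (INR k * x)) 0 (2 * PI)
   (/ 2 * ((if Nat.eqb j k then 2 * PI else 0) + (if Nat.eqb (j + k) 0 then 2 * PI else 0))).
Proof.
  rewrite <- Z_of_nat_sub_eqb, <- Z_of_nat_add_eqb.
  apply (is_RInt_fun_eq (fun x => / 2 * (cos (IZR (Z.of_nat j - Z.of_nat k) * x)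
                                        + cos (IZR (Z.of_nat j + Z.of_nat k) * x)))).
  - intros x. rewrite IZR_of_nat_sub_mul, IZR_of_nat_add_mul, cos_minus, cos_plus. field.
  - apply is_RInt_Rscal, is_RInt_Rplus; apply is_RInt_cos_Z.
Qed.

Lemma is_RInt_sin_sin (j k : nat) :
  is_RInt (fun x => sin (INR j * x) * sin (INR k * x)) 0 (2 * PI)
   (/ 2 * ((if Nat.eqb j k then 2 * PI else 0) - (if Nat.eqb (j + k) 0 then 2 * PI else 0))).
Proof.
  rewrite <- Z_of_nat_sub_eqb, <- Z_of_nat_add_eqb.
  apply (is_RInt_fun_eq (fun x => / 2 * (cos (IZR (Z.of_nat j - Z.of_nat k) * x)
                                        - cos (IZR (Z.of_nat j + Z.of_nat k) * x)))).
  - intros x. rewrite IZR_of_nat_sub_mul, IZR_of_nat_add_mul, cos_minus, cos_plus. field.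
  - apply is_RInt_Rscal, is_RInt_Rminus; apply is_RInt_cos_Z.
Qed.

Lemma is_RInt_sin_cos (j k : nat) :
  is_RInt (fun x => sin (INR j * x) * cos (INR k * x)) 0 (2 * PI) 0.
Proof.
  apply (is_RInt_fun_eq (fun x => / 2 * (sin (IZR (Z.of_nat j + Z.of_nat k) * x)
                                        + sin (IZR (Z.of_nat j - Z.of_nat k) * x)))).
  - intros x. rewrite IZR_of_nat_sub_mul, IZR_of_nat_add_mul, sin_minus, sin_plus. field.
  - apply (is_RInt_val_eq _ _ _ (/ 2 * (0 + 0))); [ring|].
    apply is_RInt_Rscal, is_RInt_Rplus; apply is_RInt_sin_Z.
Qed.

Lemma is_RInt_cos_sin (j k : nat) :
  is_RInt (fun x => cos (INR j * x) * sin (INR k * x)) 0 (2 * PI) 0.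
Proof.
  apply (is_RInt_fun_eq (fun x => sin (INR k * x) * cos (INR j * x))); [intros; ring|].
  apply is_RInt_sin_cos.
Qed.

Lemma is_RInt_cos_nat (k : nat) :
  is_RInt (fun x => cos (INR k * x)) 0 (2 * PI) (if Nat.eqb k 0 then 2 * PI else 0).
Proof.
  apply (is_RInt_fun_eq (fun x => cos (INR k * x) * cos (INR 0 * x))).
  { intros x. rewrite Rmult_0_l, cos_0. ring. }
  eapply is_RInt_val_eq; [|apply is_RInt_cos_cos].
  rewrite Nat.add_0_r. destruct (Nat.eqb k 0); field.
Qed.

Lemma is_RInt_sin_nat (k : nat) : is_RInt (fun x => sin (INR k * x)) 0 (2 * PI) 0.
Proof.
  apply (is_RInt_fun_eq (fun x => sin (INR k * x) * cos (INR 0 * x))).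
  { intros x. rewrite Rmult_0_l, cos_0. ring. }
  apply is_RInt_sin_cos.
Qed.

Lemma RInt_by_parts_period (f f' g g' : R -> R) :
  (forall x, is_derive f x (f' x)) -> (forall x, is_derive g x (g' x)) ->
  (forall x, continuous f' x) -> (forall x, continuous g' x) ->
  f (2 * PI) * g (2 * PI) = f 0 * g 0 ->
  RInt (fun x => f' x * g x) 0 (2 * PI) = - RInt (fun x => f x * g' x) 0 (2 * PI).
Proof.
  intros Df Dg Cf' Cg' Hbd.
  assert (Cf : forall x, continuous f x).
  { intros x; apply (@ex_derive_continuous R_AbsRing R_NormedModule); eexists; apply Df. }
  assert (Cg : forall x, continuous g x).
  { intros x; apply (@ex_derive_continuous R_AbsRing R_NormedModule); eexists; apply Dg. }
  assert (Hprod : is_RInt (fun x => f' x * g x + f x * g' x) 0 (2 * PI) 0).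
  { apply (is_RInt_val_eq _ _ _ (f (2 * PI) * g (2 * PI) - f 0 * g 0)); [lra|].
    apply (is_RInt_derive (fun x => f x * g x)).
    - intros x _. evar (l : R). replace (f' x * g x + f x * g' x) with l.
      + apply (@is_derive_mult R_AbsRing); auto. intros; apply Rmult_comm.
      + unfold l. simpl. unfold plus, mult; simpl. ring.
    - intros x _. apply continuous_Rplus; apply continuous_Rmult; auto. }
  assert (Hsum := is_RInt_Rplus _ _ 0 (2 * PI) _ _
    (continuous_is_RInt (fun x => f' x * g x) 0 (2 * PI) ltac:(intros; apply continuous_Rmult; auto))
    (continuous_is_RInt (fun x => f x * g' x) 0 (2 * PI) ltac:(intros; apply continuous_Rmult; auto))).
  cbv beta in Hsum.
  assert (Hu := @is_RInt_unique R_CompleteNormedModule _ _ _ _ Hsum).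
  rewrite (is_RInt_unique _ _ _ _ Hprod) in Hu. lra.
Qed.

Definition tseries (u v : nat -> R) (x : R) : R :=
  Series (fun n => u n * cos (INR n * x) + v n * sin (INR n * x)).

Definition abs_summable (u v : nat -> R) : Prop :=
  ex_series (fun n => Rabs (u n) + Rabs (v n)).

Lemma abs_summable_le (K : R) (u v u' v' : nat -> R) :
  (forall n, Rabs (u' n) + Rabs (v' n) <= K * (Rabs (u n) + Rabs (v n))) ->
  abs_summable u v -> abs_summable u' v'.
Proof.
  intros Hle Hs.
  apply (@ex_series_le R_AbsRing R_CompleteNormedModule _ (fun n => K * (Rabs (u n) + Rabs (v n)))).
  - intros n. change (Rabs (Rabs (u' n) + Rabs (v' n)) <= K * (Rabs (u n) + Rabs (v n))).
    rewrite Rabs_pos_eq; auto. pose proof (Rabs_pos (u' n)); pose proof (Rabs_pos (v' n)); lra.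
  - apply (@ex_series_scal R_AbsRing R_NormedModule); auto.
Qed.

Lemma abs_summable_scal (c : R) (u v : nat -> R) :
  abs_summable u v -> abs_summable (fun n => c * u n) (fun n => c * v n).
Proof. apply (abs_summable_le (Rabs c)). intros n. rewrite !Rabs_mult. lra. Qed.

(** The coefficients of the conjugate series [Σ (u_n sin nθ - v_n cos nθ)]. *)
Lemma abs_summable_conj (u v : nat -> R) : abs_summable u v -> abs_summable (fun n => - v n) u.
Proof. apply (abs_summable_le 1). intros n. rewrite Rabs_Ropp. lra. Qed.

(** Halving the constant term, as in the definition of [b_+]. *)
Definition halve_const (u : nat -> R) (n : nat) : R := if Nat.eqb n 0 then u n / 2 else u n.

Lemma abs_summable_halve (u v : nat -> R) : abs_summable u v -> abs_summable (halve_const u) v.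
Proof.
  apply (abs_summable_le 1). intros n. unfold halve_const. destruct (Nat.eqb n 0); [|lra].
  unfold Rdiv. rewrite Rabs_mult, (Rabs_pos_eq (/ 2)) by lra. pose proof (Rabs_pos (u n)). lra.
Qed.

Lemma trig_comb_bound A B y : Rabs (A * cos y + B * sin y) <= Rabs A + Rabs B.
Proof.
  eapply Rle_trans; [apply Rabs_triang|]. rewrite !Rabs_mult.
  pose proof (COS_bound y). pose proof (SIN_bound y).
  assert (Rabs (cos y) <= 1) by (apply Rabs_le; lra).
  assert (Rabs (sin y) <= 1) by (apply Rabs_le; lra).
  pose proof (Rabs_pos A). pose proof (Rabs_pos B). nra.
Qed.

Section TrigSeries.
Variables u v : nat -> R.
Hypothesis Huv : abs_summable u v.

Lemma tseries_bound x : Rabs (tseries u v x) <= Series (fun n => Rabs (u n) + Rabs (v n)).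
Proof. apply Series_abs_bound; auto. intros; apply trig_comb_bound. Qed.

Lemma tseries_first_term x :
  tseries u v x = u 0%nat + Series (fun m => u (S m) * cos (INR (S m) * x) + v (S m) * sin (INR (S m) * x)).
Proof.
  unfold tseries. rewrite Series_incr_1.
  - change (INR 0) with 0. rewrite Rmult_0_l, cos_0, sin_0. ring.
  - apply (@ex_series_le R_AbsRing R_CompleteNormedModule _ (fun n => Rabs (u n) + Rabs (v n)));
      [|exact Huv].
    intros; apply trig_comb_bound.
Qed.

Lemma is_RInt_mul_tseries (h : R -> R) (Mh : R) (Ic Is : nat -> R) :
  (forall x, 0 <= x <= 2 * PI -> Rabs (h x) <= Mh) ->
  (forall n, is_RInt (fun x => h x * cos (INR n * x)) 0 (2 * PI) (Ic n)) ->
  (forall n, is_RInt (fun x => h x * sin (INR n * x)) 0 (2 * PI) (Is n)) ->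
  is_RInt (fun x => h x * tseries u v x) 0 (2 * PI) (Series (fun n => u n * Ic n + v n * Is n)).
Proof.
  intros Hh HIc HIs. pose proof PI_RGT_0.
  destruct (is_RInt_Series (fun n x => h x * (u n * cos (INR n * x) + v n * sin (INR n * x)))
     (fun n => Mh * (Rabs (u n) + Rabs (v n))) (fun n => u n * Ic n + v n * Is n) 0 (2 * PI))
    as [Hint _].
  - lra.
  - intros n. apply (is_RInt_fun_eq (fun x => u n * (h x * cos (INR n * x)) + v n * (h x * sin (INR n * x)))).
    + intros; ring.
    + apply is_RInt_Rplus; apply is_RInt_Rscal; auto.
  - intros n x Hx. rewrite Rabs_mult.
    apply Rmult_le_compat; auto using Rabs_pos, trig_comb_bound.
  - apply (@ex_series_scal R_AbsRing R_NormedModule); auto.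
  - apply (is_RInt_fun_eq _ _ _ _ _ ltac:(intros; unfold tseries; apply Series_scal_l) Hint).
Qed.

Lemma tseries_cos_coef k :
  is_RInt (fun x => tseries u v x * cos (INR k * x)) 0 (2 * PI)
    ((if Nat.eqb k 0 then 2 * PI else PI) * u k).
Proof.
  apply (is_RInt_fun_eq (fun x => cos (INR k * x) * tseries u v x)); [intros; ring|].
  eapply is_RInt_val_eq; [|apply (is_RInt_mul_tseries _ 1
    (fun n => / 2 * ((if Nat.eqb k n then 2 * PI else 0) + (if Nat.eqb (k + n) 0 then 2 * PI else 0)))
    (fun _ => 0))].
  - rewrite <- (Series_delta k ((if Nat.eqb k 0 then 2 * PI else PI) * u k)).
    apply Series_ext. intros n.
    destruct (Nat.eqb_spec k n), (Nat.eqb_spec n k), (Nat.eqb_spec (k + n) 0), (Nat.eqb_spec k 0);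
      subst; try lia; field.
  - intros x _. pose proof (COS_bound (INR k * x)). apply Rabs_le; lra.
  - intros n. apply is_RInt_cos_cos.
  - intros n. apply is_RInt_cos_sin.
Qed.

Lemma tseries_sin_coef k :
  is_RInt (fun x => tseries u v x * sin (INR k * x)) 0 (2 * PI)
    ((if Nat.eqb k 0 then 0 else PI) * v k).
Proof.
  apply (is_RInt_fun_eq (fun x => sin (INR k * x) * tseries u v x)); [intros; ring|].
  eapply is_RInt_val_eq; [|apply (is_RInt_mul_tseries _ 1 (fun _ => 0)
    (fun n => / 2 * ((if Nat.eqb k n then 2 * PI else 0) - (if Nat.eqb (k + n) 0 then 2 * PI else 0))))].
  - rewrite <- (Series_delta k ((if Nat.eqb k 0 then 0 else PI) * v k)).
    apply Series_ext. intros n.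
    destruct (Nat.eqb_spec k n), (Nat.eqb_spec n k), (Nat.eqb_spec (k + n) 0), (Nat.eqb_spec k 0);
      subst; try lia; field.
  - intros x _. pose proof (SIN_bound (INR k * x)). apply Rabs_le; lra.
  - intros n. apply is_RInt_sin_cos.
  - intros n. apply is_RInt_sin_sin.
Qed.

End TrigSeries.
Lemma tseries_product (p q u v : nat -> R) : abs_summable p q -> abs_summable u v ->
  is_RInt (fun x => tseries p q x * tseries u v x) 0 (2 * PI)
    (Series (fun n => u n * ((if Nat.eqb n 0 then 2 * PI else PI) * p n)
                    + v n * ((if Nat.eqb n 0 then 0 else PI) * q n))).
Proof.
  intros Hpq Huv.
  apply (is_RInt_mul_tseries u v Huv _ (Series (fun n => Rabs (p n) + Rabs (q n)))).
  - intros x _. apply tseries_bound, Hpq.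
  - intros n. apply tseries_cos_coef, Hpq.
  - intros n. apply tseries_sin_coef, Hpq.
Qed.

Definition fcos (a : R -> R) (n : nat) : R :=
  / (2 * PI) * RInt (fun x => a x * cos (INR n * x)) 0 (2 * PI).
Definition fsin (a : R -> R) (n : nat) : R :=
  / (2 * PI) * RInt (fun x => a x * sin (INR n * x)) 0 (2 * PI).

Lemma mul_2PI_inv_2PI (X : R) : 2 * PI * (/ (2 * PI) * X) = X.
Proof. field. apply PI_neq0. Qed.

Lemma is_RInt_fcos (a : R -> R) n : (forall x, continuous a x) ->
  is_RInt (fun x => a x * cos (INR n * x)) 0 (2 * PI) (2 * PI * fcos a n).
Proof.
  intros Hc. unfold fcos. rewrite mul_2PI_inv_2PI.
  apply continuous_is_RInt. intros; apply continuous_Rmult; auto using continuous_cos_mul.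
Qed.

Lemma is_RInt_fsin (a : R -> R) n : (forall x, continuous a x) ->
  is_RInt (fun x => a x * sin (INR n * x)) 0 (2 * PI) (2 * PI * fsin a n).
Proof.
  intros Hc. unfold fsin. rewrite mul_2PI_inv_2PI.
  apply continuous_is_RInt. intros; apply continuous_Rmult; auto using continuous_sin_mul.
Qed.

Lemma fsin_0 (a : R -> R) : fsin a 0 = 0.
Proof.
  unfold fsin. rewrite (RInt_ext _ (fun _ => 0)), RInt_const.
  - unfold scal; simpl; unfold mult; simpl. ring.
  - intros; simpl. rewrite Rmult_0_l, sin_0. ring.
Qed.

Section CoefDerivative.
Variables f f' : R -> R.
Hypothesis Df : forall x, is_derive f x (f' x).
Hypothesis Cf' : forall x, continuous f' x.
Hypothesis Pf : f (2 * PI) = f 0.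

Let Cf : forall x, continuous f x.
Proof. intros x; apply (@ex_derive_continuous R_AbsRing R_NormedModule); eexists; apply Df. Qed.

Lemma fcos_derive n : fcos f' n = INR n * fsin f n.
Proof.
  unfold fcos, fsin.
  rewrite (RInt_by_parts_period f f' _ (fun x => - INR n * sin (INR n * x))); auto.
  - rewrite (is_RInt_unique _ 0 (2 * PI) (- INR n * RInt (fun x => f x * sin (INR n * x)) 0 (2 * PI))).
    + ring.
    + apply (is_RInt_fun_eq (fun x => - INR n * (f x * sin (INR n * x)))); [intros; ring|].
      apply is_RInt_Rscal, continuous_is_RInt. intros; apply continuous_Rmult; auto using continuous_sin_mul.
  - intros x. auto_derive; auto. ring.
  - intros x. apply (continuous_Rmult (fun _ => - INR n)); auto using continuous_const, continuous_sin_mul.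
  - rewrite Pf, (Rmult_0_r (INR n)), cos_0, INR_IZR_INZ, cos_2PI_Z. ring.
Qed.

Lemma fsin_derive n : fsin f' n = - INR n * fcos f n.
Proof.
  unfold fcos, fsin.
  rewrite (RInt_by_parts_period f f' _ (fun x => INR n * cos (INR n * x))); auto.
  - rewrite (is_RInt_unique _ 0 (2 * PI) (INR n * RInt (fun x => f x * cos (INR n * x)) 0 (2 * PI))).
    + ring.
    + apply (is_RInt_fun_eq (fun x => INR n * (f x * cos (INR n * x)))); [intros; ring|].
      apply is_RInt_Rscal, continuous_is_RInt. intros; apply continuous_Rmult; auto using continuous_cos_mul.
  - intros x. auto_derive; auto. ring.
  - intros x. apply (continuous_Rmult (fun _ => INR n)); auto using continuous_const, continuous_cos_mul.
  - rewrite (Rmult_0_r (INR n)), sin_0, INR_IZR_INZ, sin_2PI_Z. ring.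
Qed.

Lemma fourier_abs_derive n : (1 <= n)%nat ->
  Rabs (fcos f n) + Rabs (fsin f n) = / INR n * (Rabs (fcos f' n) + Rabs (fsin f' n)).
Proof.
  intros Hn. rewrite fcos_derive, fsin_derive.
  assert (0 < INR n) by (apply lt_0_INR; lia).
  rewrite !Rabs_mult, Rabs_Ropp, (Rabs_pos_eq (INR n)) by lra. field. lra.
Qed.

End CoefDerivative.

Lemma fourier_abs_bound (f : R -> R) M n : (forall x, continuous f x) ->
  (forall x, 0 <= x <= 2 * PI -> Rabs (f x) <= M) -> Rabs (fcos f n) + Rabs (fsin f n) <= 2 * M.
Proof.
  intros Hc HM. pose proof PI_RGT_0.
  assert (Htrig : forall (g : R -> R), (forall y, Rabs (g y) <= 1) -> (forall x, continuous g x) ->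
    Rabs (/ (2 * PI) * RInt (fun x => f x * g x) 0 (2 * PI)) <= M).
  { intros g Hg Cg. rewrite Rabs_mult, Rabs_pos_eq by (apply Rlt_le, Rinv_0_lt_compat; lra).
    apply (Rmult_le_reg_l (2 * PI)); [lra|]. rewrite <- Rmult_assoc, Rinv_r, Rmult_1_l by lra.
    replace (2 * PI * M) with ((2 * PI - 0) * M) by ring.
    apply abs_RInt_le_const; [lra| |].
    - apply continuous_ex_RInt; intros; apply continuous_Rmult; auto.
    - intros t Ht. rewrite Rabs_mult. specialize (HM t Ht). specialize (Hg t).
      pose proof (Rabs_pos (f t)). pose proof (Rabs_pos (g t)). nra. }
  assert (Hcos := Htrig (fun x => cos (INR n * x))
                    ltac:(intros y; pose proof (COS_bound (INR n * y)); apply Rabs_le; lra)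
                    (continuous_cos_mul n)).
  assert (Hsin := Htrig (fun x => sin (INR n * x))
                    ltac:(intros y; pose proof (SIN_bound (INR n * y)); apply Rabs_le; lra)
                    (continuous_sin_mul n)).
  unfold fcos, fsin. lra.
Qed.

Lemma periodic_derive (f f' : R -> R) : (forall x, f (x + 2 * PI) = f x) ->
  (forall x, is_derive f x (f' x)) -> forall x, f' (x + 2 * PI) = f' x.
Proof.
  intros Hp Hd x.
  assert (H1 : is_derive (fun y => f (y + 2 * PI)) x (f' (x + 2 * PI))).
  { evar (l : R). replace (f' (x + 2 * PI)) with l.
    - apply (is_derive_comp f (fun y => y + 2 * PI)); [apply Hd | auto_derive; auto].
    - unfold l. simpl. unfold scal; simpl; unfold mult; simpl. ring. }
  assert (H2 : is_derive (fun y => f (y + 2 * PI)) x (f' x)).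
  { apply (is_derive_ext f); [intros; rewrite Hp; auto | apply Hd]. }
  apply is_derive_unique in H1. apply is_derive_unique in H2. congruence.
Qed.

Lemma periodic_endpoints (f : R -> R) : (forall x, f (x + 2 * PI) = f x) -> f (2 * PI) = f 0.
Proof. intros Hp. rewrite <- (Rplus_0_l (2 * PI)). apply Hp. Qed.

Definition periodic_C3 (a : R -> R) : Prop :=
  (forall x, a (x + 2 * PI) = a x) /\
  exists a1 a2 a3 : R -> R,
    (forall x, is_derive a x (a1 x)) /\ (forall x, is_derive a1 x (a2 x)) /\
    (forall x, is_derive a2 x (a3 x)) /\ (forall x, continuous a3 x).

Lemma fourier_decay (a : R -> R) : periodic_C3 a ->
  exists K, 0 <= K /\ forall n, (1 <= n)%nat -> Rabs (fcos a n) + Rabs (fsin a n) <= K / INR n ^ 3.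
Proof.
  intros [Pa [a1 [a2 [a3 [D0 [D1 [D2 C3]]]]]]].
  assert (C2 : forall x, continuous a2 x).
  { intros x; apply (@ex_derive_continuous R_AbsRing R_NormedModule); eexists; apply D2. }
  assert (C1 : forall x, continuous a1 x).
  { intros x; apply (@ex_derive_continuous R_AbsRing R_NormedModule); eexists; apply D1. }
  assert (P1 := periodic_derive _ _ Pa D0). assert (P2 := periodic_derive _ _ P1 D1).
  pose proof PI_RGT_0.
  destruct (continuous_bounded a3 0 (2 * PI) ltac:(lra) C3) as [M HM].
  exists (2 * M). split.
  { specialize (HM 0 ltac:(lra)). pose proof (Rabs_pos (a3 0)). lra. }
  intros n Hn.
  rewrite (fourier_abs_derive a a1), (fourier_abs_derive a1 a2), (fourier_abs_derive a2 a3);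
    auto using periodic_endpoints.
  assert (Hb := fourier_abs_bound a3 M n C3 HM).
  assert (0 < INR n) by (apply lt_0_INR; lia).
  replace (2 * M / INR n ^ 3) with (/ INR n * (/ INR n * (/ INR n * (2 * M)))) by (field; lra).
  assert (0 < / INR n) by (apply Rinv_0_lt_compat; lra).
  repeat (apply Rmult_le_compat_l; [lra|]). exact Hb.
Qed.

(** [O(n⁻³)] decay makes both [Σ T_n] and [Σ n T_n] converge (compare with
    the telescoping series). *)
Lemma summable_of_cubic_decay (T : nat -> R) K :
  0 <= K -> (forall n, 0 <= T n) -> (forall n, (1 <= n)%nat -> T n <= K / INR n ^ 3) ->
  ex_series (fun n => INR n * T n) /\ ex_series T.
Proof.
  intros HK HT Hb.
  assert (Hw : ex_series (fun n => INR n * T n)).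
  { apply ex_series_incr_1.
    apply (@ex_series_le R_AbsRing R_CompleteNormedModule _ (fun k => 2 * K * / ((INR k + 1) * (INR k + 2)))).
    - intros k. change (Rabs (INR (S k) * T (S k)) <= 2 * K * / ((INR k + 1) * (INR k + 2))).
      rewrite S_INR. assert (0 <= INR k) by apply pos_INR.
      specialize (Hb (S k) ltac:(lia)). rewrite S_INR in Hb. specialize (HT (S k)).
      rewrite Rabs_pos_eq by (apply Rmult_le_pos; lra).
      apply Rle_trans with ((INR k + 1) * (K / (INR k + 1) ^ 3)); [apply Rmult_le_compat_l; lra|].
      replace ((INR k + 1) * (K / (INR k + 1) ^ 3)) with (K * / ((INR k + 1) * (INR k + 1))) by (field; lra).
      replace (2 * K * / ((INR k + 1) * (INR k + 2))) with (K * (2 / ((INR k + 1) * (INR k + 2)))) by (field; lra).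
      apply Rmult_le_compat_l; auto.
      apply (Rmult_le_reg_r ((INR k + 1) * (INR k + 1) * (INR k + 2))); [nra|].
      field_simplify; nra.
    - apply (@ex_series_scal R_AbsRing R_NormedModule (2 * K) _ ex_series_telescope). }
  split; auto.
  apply ex_series_incr_1. apply ex_series_incr_1 in Hw.
  apply (@ex_series_le R_AbsRing R_CompleteNormedModule _ (fun n => INR (S n) * T (S n))); auto.
  intros k. change (Rabs (T (S k)) <= INR (S k) * T (S k)). rewrite Rabs_pos_eq by auto.
  rewrite S_INR. specialize (HT (S k)). pose proof (pos_INR k). nra.
Qed.

Lemma fourier_summable (a : R -> R) : periodic_C3 a ->
  abs_summable (fcos a) (fsin a) /\
  abs_summable (fun n => INR n * fcos a n) (fun n => INR n * fsin a n).
Proof.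
  intros Ha. destruct (fourier_decay a Ha) as [K [HK Hdec]].
  destruct (summable_of_cubic_decay (fun n => Rabs (fcos a n) + Rabs (fsin a n)) K) as [Hw H0]; auto.
  { intros; pose proof (Rabs_pos (fcos a n)); pose proof (Rabs_pos (fsin a n)); lra. }
  split; [exact H0|].
  apply (ex_series_ext (fun n => INR n * (Rabs (fcos a n) + Rabs (fsin a n)))); [|exact Hw].
  intros n.
  change (INR n * (Rabs (fcos a n) + Rabs (fsin a n))
          = Rabs (INR n * fcos a n) + Rabs (INR n * fsin a n)).
  rewrite !Rabs_mult, (Rabs_pos_eq (INR n)) by apply pos_INR. ring.
Qed.

(** Uniqueness: a continuous periodic function orthogonal to every [cos nθ] and
    [sin nθ] vanishes. It is then orthogonal to every trigonometric polynomial,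
    in particular to the kernels [(1 + cos(θ - θ₀))^k], which concentrate at
    [θ₀] as [k → ∞] and so detect any non-zero value. *)
Inductive trig_poly : (R -> R) -> Prop :=
| trig_poly_cos n : trig_poly (fun x => cos (INR n * x))
| trig_poly_sin n : trig_poly (fun x => sin (INR n * x))
| trig_poly_add p q : trig_poly p -> trig_poly q -> trig_poly (fun x => p x + q x)
| trig_poly_scal c p : trig_poly p -> trig_poly (fun x => c * p x)
| trig_poly_ext p q : trig_poly p -> (forall x, p x = q x) -> trig_poly q.

Lemma trig_poly_orthogonal (g : R -> R) :
  (forall x, continuous g x) ->
  (forall n, RInt (fun x => g x * cos (INR n * x)) 0 (2 * PI) = 0 /\
             RInt (fun x => g x * sin (INR n * x)) 0 (2 * PI) = 0) ->
  forall p, trig_poly p -> (forall x, continuous p x) /\ is_RInt (fun x => g x * p x) 0 (2 * PI) 0.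
Proof.
  intros Hg Hcoef p Hp. induction Hp as [n|n|p q _ [Cp Ip] _ [Cq Iq]|c p _ [Cp Ip]|p q _ [Cp Ip] Hpq].
  - split; [apply continuous_cos_mul|].
    eapply is_RInt_val_eq; [apply (proj1 (Hcoef n)) | apply continuous_is_RInt].
    intros; apply continuous_Rmult; auto using continuous_cos_mul.
  - split; [apply continuous_sin_mul|].
    eapply is_RInt_val_eq; [apply (proj2 (Hcoef n)) | apply continuous_is_RInt].
    intros; apply continuous_Rmult; auto using continuous_sin_mul.
  - split; [intros; apply continuous_Rplus; auto|].
    apply (is_RInt_fun_eq (fun x => g x * p x + g x * q x)); [intros; ring|].
    apply (is_RInt_val_eq _ _ _ (0 + 0)); [ring | apply is_RInt_Rplus; auto].
  - split; [intros; apply continuous_Rmult; auto using continuous_const|].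
    apply (is_RInt_fun_eq (fun x => c * (g x * p x))); [intros; ring|].
    apply (is_RInt_val_eq _ _ _ (c * 0)); [ring | apply is_RInt_Rscal; auto].
  - split; [intros; apply (continuous_ext p); auto|].
    apply (is_RInt_fun_eq (fun x => g x * p x)); [intros; rewrite Hpq; auto | auto].
Qed.

Lemma trig_poly_mul_cos p : trig_poly p -> trig_poly (fun x => p x * cos x).
Proof.
  intros Hp. induction Hp as [[|n]|[|n]|p q _ IHp _ IHq|c p _ IHp|p q _ IHp Hpq].
  - apply (trig_poly_ext _ _ (trig_poly_cos 1)). intros; simpl.
    rewrite !Rmult_1_l, Rmult_0_l, cos_0. ring.
  - apply (trig_poly_ext _ _ (trig_poly_scal (/ 2) _
      (trig_poly_add _ _ (trig_poly_cos (S (S n))) (trig_poly_cos n)))).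
    intros x. replace (INR (S (S n)) * x) with (INR (S n) * x + x) by (rewrite !S_INR; ring).
    replace (INR n * x) with (INR (S n) * x - x) by (rewrite !S_INR; ring).
    rewrite cos_plus, cos_minus. field.
  - apply (trig_poly_ext _ _ (trig_poly_scal 0 _ (trig_poly_cos 0))). intros; simpl.
    rewrite !Rmult_0_l, sin_0. ring.
  - apply (trig_poly_ext _ _ (trig_poly_scal (/ 2) _
      (trig_poly_add _ _ (trig_poly_sin (S (S n))) (trig_poly_sin n)))).
    intros x. replace (INR (S (S n)) * x) with (INR (S n) * x + x) by (rewrite !S_INR; ring).
    replace (INR n * x) with (INR (S n) * x - x) by (rewrite !S_INR; ring).
    rewrite sin_plus, sin_minus. field.
  - apply (trig_poly_ext _ _ (trig_poly_add _ _ IHp IHq)). intros; ring.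
  - apply (trig_poly_ext _ _ (trig_poly_scal c _ IHp)). intros; ring.
  - apply (trig_poly_ext _ _ IHp). intros; rewrite Hpq; auto.
Qed.

Lemma trig_poly_mul_sin p : trig_poly p -> trig_poly (fun x => p x * sin x).
Proof.
  intros Hp. induction Hp as [[|n]|[|n]|p q _ IHp _ IHq|c p _ IHp|p q _ IHp Hpq].
  - apply (trig_poly_ext _ _ (trig_poly_sin 1)). intros; simpl.
    rewrite !Rmult_1_l, Rmult_0_l, cos_0. ring.
  - apply (trig_poly_ext _ _ (trig_poly_scal (/ 2) _
      (trig_poly_add _ _ (trig_poly_sin (S (S n))) (trig_poly_scal (-1) _ (trig_poly_sin n))))).
    intros x. replace (INR (S (S n)) * x) with (INR (S n) * x + x) by (rewrite !S_INR; ring).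
    replace (INR n * x) with (INR (S n) * x - x) by (rewrite !S_INR; ring).
    rewrite sin_plus, sin_minus. field.
  - apply (trig_poly_ext _ _ (trig_poly_scal 0 _ (trig_poly_cos 0))). intros; simpl.
    rewrite !Rmult_0_l, sin_0. ring.
  - apply (trig_poly_ext _ _ (trig_poly_scal (/ 2) _
      (trig_poly_add _ _ (trig_poly_cos n) (trig_poly_scal (-1) _ (trig_poly_cos (S (S n))))))).
    intros x. replace (INR (S (S n)) * x) with (INR (S n) * x + x) by (rewrite !S_INR; ring).
    replace (INR n * x) with (INR (S n) * x - x) by (rewrite !S_INR; ring).
    rewrite cos_plus, cos_minus. field.
  - apply (trig_poly_ext _ _ (trig_poly_add _ _ IHp IHq)). intros; ring.
  - apply (trig_poly_ext _ _ (trig_poly_scal c _ IHp)). intros; ring.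
  - apply (trig_poly_ext _ _ IHp). intros; rewrite Hpq; auto.
Qed.

(** Hence [(1 + cos(θ - θ₀))^k = (1 + cos θ₀ cos θ + sin θ₀ sin θ)^k] is a
    trigonometric polynomial, by induction on [k]. *)
Lemma trig_poly_kernel x0 k : trig_poly (fun x => (1 + cos (x - x0)) ^ k).
Proof.
  induction k.
  - apply (trig_poly_ext _ _ (trig_poly_cos 0)). intros; simpl. rewrite Rmult_0_l, cos_0; auto.
  - apply (trig_poly_ext _ _ (trig_poly_add _ _ IHk
      (trig_poly_add _ _ (trig_poly_scal (cos x0) _ (trig_poly_mul_cos _ IHk))
                         (trig_poly_scal (sin x0) _ (trig_poly_mul_sin _ IHk))))).
    intros x. rewrite cos_minus. simpl. ring.
Qed.

Lemma cos_Rabs y : cos (Rabs y) = cos y.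
Proof. destruct (Rcase_abs y); [rewrite Rabs_left, cos_neg | rewrite Rabs_right]; auto. Qed.

Lemma cos_2PI_minus v : cos (2 * PI - v) = cos v.
Proof. rewrite cos_minus, cos_2PI, sin_2PI. ring. Qed.

Lemma kernel_near x x0 d k : 0 < d <= PI -> Rabs (x - x0) <= d / 2 ->
  (1 + cos (d / 2)) ^ k <= (1 + cos (x - x0)) ^ k.
Proof.
  intros Hd Hx. apply pow_incr. split; [pose proof (COS_bound (d / 2)); lra|].
  apply Rplus_le_compat_l. rewrite <- (cos_Rabs (x - x0)). apply cos_decr_1; try lra; apply Rabs_pos.
Qed.

Lemma kernel_far x x0 d k : 0 < d <= PI -> d <= Rabs (x - x0) <= 2 * PI - d ->
  (1 + cos (x - x0)) ^ k <= (1 + cos d) ^ k.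
Proof.
  intros Hd Hx. apply pow_incr. split; [pose proof (COS_bound (x - x0)); lra|].
  apply Rplus_le_compat_l. rewrite <- (cos_Rabs (x - x0)). destruct (Rle_lt_dec (Rabs (x - x0)) PI).
  - apply cos_decr_1; lra.
  - rewrite <- cos_2PI_minus. apply cos_decr_1; lra.
Qed.

Section Concentration.
Variables (h : R -> R) (x0 d c M : R).
Hypothesis Hh : forall x, continuous h x.
Hypothesis Hd : 0 < d.
Hypothesis Hx0 : d < x0 < 2 * PI - d.
Hypothesis Hc : 0 <= c.
Hypothesis Hnear : forall x, Rabs (x - x0) <= d -> c <= h x.
Hypothesis HM : forall x, 0 <= x <= 2 * PI -> Rabs (h x) <= M.

Let kernel (k : nat) (x : R) : R := h x * (1 + cos (x - x0)) ^ k.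

Lemma kernel_continuous k x : continuous (kernel k) x.
Proof.
  apply continuous_Rmult; auto.
  apply (ex_derive_continuous (fun x => (1 + cos (x - x0)) ^ k)). auto_derive; auto.
Qed.

Lemma kernel_outer_bound k x : 0 <= x <= 2 * PI -> - (M * (1 + cos d) ^ k) <= kernel k x.
Proof.
  intros Hx. unfold kernel.
  assert (Hk0 : 0 <= (1 + cos (x - x0)) ^ k) by (apply pow_le; pose proof (COS_bound (x - x0)); lra).
  destruct (Rle_lt_dec (Rabs (x - x0)) d) as [Hin|Hout].
  - assert (0 <= M) by (pose proof (Rabs_pos (h x)); specialize (HM x Hx); lra).
    assert (0 <= (1 + cos d) ^ k) by (apply pow_le; pose proof (COS_bound d); lra).
    specialize (Hnear x Hin). nra.
  - assert (Hfar : (1 + cos (x - x0)) ^ k <= (1 + cos d) ^ k).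
    { apply kernel_far; [lra|]. split; [lra|]. apply Rabs_le; lra. }
    assert (Rabs (h x * (1 + cos (x - x0)) ^ k) <= M * (1 + cos d) ^ k).
    { rewrite Rabs_mult, (Rabs_pos_eq ((1 + cos (x - x0)) ^ k)) by lra.
      apply Rmult_le_compat; auto using Rabs_pos. }
    apply Rabs_le_between in H. lra.
Qed.

(** Splitting [[0, 2π]] at [θ₀ ± d/2]: the middle piece contributes at least
    [d c (1 + cos(d/2))^k], the outer pieces at least [-2π M (1 + cos d)^k]. *)
Lemma kernel_integral_lower k :
  d * (c * (1 + cos (d / 2)) ^ k) - 2 * PI * (M * (1 + cos d) ^ k)
  <= RInt (kernel k) 0 (2 * PI).
Proof.
  assert (HP : 0 <= M * (1 + cos d) ^ k).
  { specialize (HM x0 ltac:(lra)). apply Rmult_le_pos.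
    - pose proof (Rabs_pos (h x0)); lra.
    - apply pow_le; pose proof (COS_bound d); lra. }
  rewrite (RInt_Chasles_continuous _ 0 (x0 - d / 2)), (RInt_Chasles_continuous _ (x0 - d / 2) (x0 + d / 2));
    try apply kernel_continuous.
  assert (I1 := RInt_lower_bound (kernel k) 0 (x0 - d / 2) _ ltac:(lra) (kernel_continuous k)
                  ltac:(intros; apply kernel_outer_bound; lra)).
  assert (I2 := RInt_lower_bound (kernel k) (x0 - d / 2) (x0 + d / 2) (c * (1 + cos (d / 2)) ^ k)
                  ltac:(lra) (kernel_continuous k)).
  assert (I3 := RInt_lower_bound (kernel k) (x0 + d / 2) (2 * PI) _ ltac:(lra) (kernel_continuous k)
                  ltac:(intros; apply kernel_outer_bound; lra)).
  assert (I2' : (x0 + d / 2 - (x0 - d / 2)) * (c * (1 + cos (d / 2)) ^ k)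
                <= RInt (kernel k) (x0 - d / 2) (x0 + d / 2)).
  { apply I2. intros x Hx. unfold kernel.
    assert (Hx' : Rabs (x - x0) <= d / 2) by (apply Rabs_le; lra).
    apply Rmult_le_compat; try lra.
    - apply pow_le. pose proof (COS_bound (d / 2)). lra.
    - apply Hnear. lra.
    - apply kernel_near; auto. lra. }
  nra.
Qed.

End Concentration.

Lemma geometric_domination (r1 r2 A B : R) : 0 < r2 < r1 -> 0 < A ->
  exists k, B * r2 ^ k < A * r1 ^ k.
Proof.
  intros Hr HA.
  destruct (Pow_x_infinity (r1 / r2)) with (b := B / A + 1) as [k Hk].
  { rewrite Rabs_pos_eq by (apply Rlt_le, Rdiv_lt_0_compat; lra).
    apply (Rmult_lt_reg_r r2); [lra|]. field_simplify; lra. }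
  exists k. specialize (Hk k (le_n k)).
  rewrite Rabs_pos_eq in Hk by (apply pow_le, Rlt_le, Rdiv_lt_0_compat; lra).
  assert (Hr2k : 0 < r2 ^ k) by (apply pow_lt; lra).
  replace (r1 ^ k) with ((r1 / r2) ^ k * r2 ^ k) by (rewrite <- Rpow_mult_distr; f_equal; field; lra).
  assert (B / A + 1 <= (r1 / r2) ^ k) by lra.
  assert (B < A * (r1 / r2) ^ k).
  { apply (Rmult_lt_reg_r (/ A)); [apply Rinv_0_lt_compat; lra|].
    replace (A * (r1 / r2) ^ k * / A) with ((r1 / r2) ^ k) by (field; lra).
    replace (B * / A) with (B / A) by reflexivity. lra. }
  nra.
Qed.

Lemma kernels_detect_positive (h : R -> R) x0 : (forall x, continuous h x) ->
  0 < x0 < 2 * PI -> 0 < h x0 ->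
  exists k, 0 < RInt (fun x => h x * (1 + cos (x - x0)) ^ k) 0 (2 * PI).
Proof.
  intros Hc Hx0 Hh. pose proof PI2_3_2.
  destruct (proj1 (@filterlim_locally _ _ (locally x0) _ h (h x0)) (Hc x0)
              (mkposreal (h x0 / 2) ltac:(lra))) as [del Hdel].
  assert (Hdel_pos := cond_pos del).
  set (d := Rmin (del / 2) (Rmin (x0 / 2) (Rmin ((2 * PI - x0) / 2) 1))).
  assert (Hd : 0 < d /\ d < del /\ d < x0 /\ d < 2 * PI - x0 /\ d <= 1).
  { unfold d.
    pose proof (Rmin_l (del / 2) (Rmin (x0 / 2) (Rmin ((2 * PI - x0) / 2) 1))).
    pose proof (Rmin_r (del / 2) (Rmin (x0 / 2) (Rmin ((2 * PI - x0) / 2) 1))).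
    pose proof (Rmin_l (x0 / 2) (Rmin ((2 * PI - x0) / 2) 1)).
    pose proof (Rmin_r (x0 / 2) (Rmin ((2 * PI - x0) / 2) 1)).
    pose proof (Rmin_l ((2 * PI - x0) / 2) 1). pose proof (Rmin_r ((2 * PI - x0) / 2) 1).
    assert (0 < Rmin (del / 2) (Rmin (x0 / 2) (Rmin ((2 * PI - x0) / 2) 1)))
      by (repeat apply Rmin_glb_lt; lra).
    lra. }
  clearbody d.
  assert (Hnear : forall x, Rabs (x - x0) <= d -> h x0 / 2 <= h x).
  { intros x Hx. assert (Hb : ball x0 del x) by (change (Rabs (x - x0) < del); lra).
    specialize (Hdel x Hb). change (Rabs (h x - h x0) < h x0 / 2) in Hdel.
    apply Rabs_lt_between in Hdel. lra. }
  destruct (continuous_bounded h 0 (2 * PI) ltac:(lra) Hc) as [M HM].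
  assert (Hr : 0 < 1 + cos d < 1 + cos (d / 2)).
  { assert (cos PI < cos d) by (apply cos_decreasing_1; lra).
    assert (cos d < cos (d / 2)) by (apply cos_decreasing_1; lra).
    rewrite cos_PI in *. lra. }
  destruct (geometric_domination (1 + cos (d / 2)) (1 + cos d) (d * (h x0 / 2)) (2 * PI * M))
    as [k Hk]; [lra | apply Rmult_lt_0_compat; lra|].
  exists k.
  assert (Hlow := kernel_integral_lower h x0 d (h x0 / 2) M Hc ltac:(lra) ltac:(lra)
                    ltac:(lra) Hnear HM k).
  lra.
Qed.

Lemma continuous_zero_right (g : R -> R) :
  continuous g 0 -> (forall y, 0 < y < 1 -> g y = 0) -> g 0 = 0.
Proof.
  intros Hc Hz. destruct (Req_dec (g 0) 0) as [|Hn]; auto. exfalso.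
  assert (Hpos : 0 < Rabs (g 0)) by (apply Rabs_pos_lt; auto).
  destruct (proj1 (@filterlim_locally _ _ (locally 0) _ g (g 0)) Hc (mkposreal _ Hpos))
    as [del Hdel].
  set (y := Rmin (del / 2) (1 / 2)).
  assert (Hy : 0 < y < 1 /\ y < del).
  { pose proof (cond_pos del). unfold y. repeat split.
    - apply Rmin_glb_lt; lra.
    - eapply Rle_lt_trans; [apply Rmin_r | lra].
    - eapply Rle_lt_trans; [apply Rmin_l | lra]. }
  assert (Hb : ball 0 del y).
  { change (Rabs (y - 0) < del). rewrite Rminus_0_r, Rabs_pos_eq; lra. }
  specialize (Hdel y Hb). change (Rabs (g y - g 0) < Rabs (g 0)) in Hdel.
  rewrite Hz, Rminus_0_l, Rabs_Ropp in Hdel by lra. lra.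
Qed.

Lemma periodic_reduce (g : R -> R) : (forall x, g (x + 2 * PI) = g x) ->
  forall x, exists y, 0 <= y < 2 * PI /\ g x = g y.
Proof.
  intros Hp x. pose proof PI_RGT_0.
  assert (Hshift : forall n y, g (y + INR n * (2 * PI)) = g y).
  { induction n; intros y; [simpl; rewrite Rmult_0_l, Rplus_0_r; auto|].
    rewrite S_INR. replace (y + (INR n + 1) * (2 * PI)) with ((y + INR n * (2 * PI)) + 2 * PI) by ring.
    rewrite Hp; auto. }
  assert (HZ : forall z y, g (y + IZR z * (2 * PI)) = g y).
  { intros z y. destruct z as [|p|p].
    - simpl. rewrite Rmult_0_l, Rplus_0_r; auto.
    - rewrite <- positive_nat_Z, <- INR_IZR_INZ. apply Hshift.
    - rewrite <- Pos2Z.opp_pos, opp_IZR, <- positive_nat_Z, <- INR_IZR_INZ.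
      rewrite <- (Hshift (Pos.to_nat p) (y + - INR (Pos.to_nat p) * (2 * PI))).
      f_equal. ring. }
  set (z := Int_part (x / (2 * PI))).
  destruct (base_Int_part (x / (2 * PI))) as [B1 B2]. fold z in B1, B2.
  exists (x - IZR z * (2 * PI)). split.
  - assert (IZR z * (2 * PI) <= x).
    { apply (Rmult_le_compat_r (2 * PI)) in B1; [|lra]. field_simplify in B1; lra. }
    assert (x < (IZR z + 1) * (2 * PI)).
    { apply (Rmult_lt_compat_r (2 * PI)) in B2; [|lra]. field_simplify in B2; lra. }
    lra.
  - rewrite <- (HZ z (x - IZR z * (2 * PI))). f_equal. ring.
Qed.

Lemma fourier_coefs_zero (g : R -> R) :
  (forall x, continuous g x) -> (forall x, g (x + 2 * PI) = g x) ->
  (forall n, RInt (fun x => g x * cos (INR n * x)) 0 (2 * PI) = 0 /\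
             RInt (fun x => g x * sin (INR n * x)) 0 (2 * PI) = 0) ->
  forall x, g x = 0.
Proof.
  intros Hc Hp Hcoef. pose proof PI2_3_2.
  assert (Hkernel : forall x0 k, is_RInt (fun x => g x * (1 + cos (x - x0)) ^ k) 0 (2 * PI) 0)
    by (intros; apply (trig_poly_orthogonal g Hc Hcoef), trig_poly_kernel).
  assert (Hin : forall x0, 0 < x0 < 2 * PI -> g x0 = 0).
  { intros x0 Hx0. destruct (Rtotal_order (g x0) 0) as [Hl|[He|Hg]]; auto; exfalso.
    - destruct (kernels_detect_positive (fun x => - g x) x0) as [k Hk]; auto; [|lra|].
      + intros x. apply (continuous_ext (fun x => (-1) * g x)); [intros; simpl; ring|].
        apply continuous_Rmult; auto using continuous_const.
      + assert (Hneg : is_RInt (fun x => - g x * (1 + cos (x - x0)) ^ k) 0 (2 * PI) 0).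
        { apply (is_RInt_fun_eq (fun x => - (g x * (1 + cos (x - x0)) ^ k))); [intros; ring|].
          apply (is_RInt_val_eq _ _ _ (- 0)); [ring | apply is_RInt_Ropp, Hkernel]. }
        rewrite (is_RInt_unique _ _ _ _ Hneg) in Hk. lra.
    - destruct (kernels_detect_positive g x0) as [k Hk]; auto.
      rewrite (is_RInt_unique _ _ _ _ (Hkernel x0 k)) in Hk. lra. }
  assert (H0 : g 0 = 0) by (apply continuous_zero_right; auto; intros; apply Hin; lra).
  intros x. destruct (periodic_reduce g Hp x) as [y [Hy ->]].
  destruct (Req_dec y 0) as [->|]; auto. apply Hin; lra.
Qed.

Lemma fcoef_of_trig_integrals (u : R -> C) n I1 I2 I3 I4 :
  is_RInt (fun x => fst (u x) * cos (INR n * x)) 0 (2 * PI) I1 ->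
  is_RInt (fun x => snd (u x) * sin (INR n * x)) 0 (2 * PI) I2 ->
  is_RInt (fun x => snd (u x) * cos (INR n * x)) 0 (2 * PI) I3 ->
  is_RInt (fun x => fst (u x) * sin (INR n * x)) 0 (2 * PI) I4 ->
  fcoef u (Z.of_nat n) = (/ (2 * PI) * (I1 + I2), / (2 * PI) * (I3 - I4)) /\
  fcoef u (- Z.of_nat n) = (/ (2 * PI) * (I1 - I2), / (2 * PI) * (I3 + I4)).
Proof.
  intros H1 H2 H3 H4. unfold fcoef, CInt, cexpi, Cmult, RtoC. cbn [Re Im fst snd].
  rewrite opp_IZR, <- INR_IZR_INZ. split.
  - rewrite (RInt_ext _ (fun x => fst (u x) * cos (INR n * x) + snd (u x) * sin (INR n * x))),
      (RInt_ext (fun x => fst (u x) * sin (- INR n * x) + snd (u x) * cos (- INR n * x))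
                (fun x => snd (u x) * cos (INR n * x) - fst (u x) * sin (INR n * x))).
    + rewrite (is_RInt_unique _ _ _ _ (is_RInt_Rplus _ _ _ _ _ _ H1 H2)),
        (is_RInt_unique _ _ _ _ (is_RInt_Rminus _ _ _ _ _ _ H3 H4)). f_equal; ring.
    + intros; simpl. rewrite !(Ropp_mult_distr_l_reverse (INR n)), cos_neg, sin_neg. ring.
    + intros; simpl. rewrite !(Ropp_mult_distr_l_reverse (INR n)), cos_neg, sin_neg. ring.
  - rewrite (RInt_ext _ (fun x => fst (u x) * cos (INR n * x) - snd (u x) * sin (INR n * x))),
      (RInt_ext (fun x => fst (u x) * sin (- - INR n * x) + snd (u x) * cos (- - INR n * x))
                (fun x => snd (u x) * cos (INR n * x) + fst (u x) * sin (INR n * x))).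
    + rewrite (is_RInt_unique _ _ _ _ (is_RInt_Rminus _ _ _ _ _ _ H1 H2)),
        (is_RInt_unique _ _ _ _ (is_RInt_Rplus _ _ _ _ _ _ H3 H4)). f_equal; ring.
    + intros; simpl. rewrite Ropp_involutive. ring.
    + intros; simpl. rewrite Ropp_involutive. ring.
Qed.

(** The imaginary part of a real function contributes nothing. *)
Lemma is_RInt_zero_mul (g : R -> R) : is_RInt (fun x => 0 * g x) 0 (2 * PI) 0.
Proof.
  apply (is_RInt_fun_eq (fun _ => 0)); [intros; ring|].
  apply (is_RInt_val_eq _ _ _ ((2 * PI - 0) * 0)); [ring | apply is_RInt_Rconst].
Qed.

Section RealProfile.
Variable a : R -> R.
Hypothesis Hc : forall x, continuous a x.

Lemma fcoef_real n :
  fcoef (toC a) (Z.of_nat n) = (fcos a n, - fsin a n) /\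
  fcoef (toC a) (- Z.of_nat n) = (fcos a n, fsin a n).
Proof.
  destruct (fcoef_of_trig_integrals (toC a) n (2 * PI * fcos a n) 0 0 (2 * PI * fsin a n))
    as [E1 E2].
  - exact (is_RInt_fcos a n Hc).
  - apply is_RInt_zero_mul.
  - apply is_RInt_zero_mul.
  - exact (is_RInt_fsin a n Hc).
  - rewrite E1, E2. split; f_equal; field; apply PI_neq0.
Qed.

Lemma cexpi_neg_mul n th : cexpi (- INR n * th) = (cos (INR n * th), - sin (INR n * th)).
Proof. unfold cexpi. rewrite Ropp_mult_distr_l_reverse, cos_neg, sin_neg. reflexivity. Qed.

Lemma Lam_real th :
  Lam (toC a) th = (tseries (fun n => 2 * (INR n * fcos a n)) (fun n => 2 * (INR n * fsin a n)) th, 0).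
Proof.
  unfold Lam, CSeries, tseries. f_equal; [|rewrite <- Series_zero]; apply Series_ext; intros n;
    destruct (fcoef_real n) as [E1 E2]; rewrite E1, E2, cexpi_neg_mul;
    unfold cexpi, Cmult, Cplus, RtoC; cbn [Re Im fst snd]; ring.
Qed.

Lemma Hil_imag th :
  snd (Hil (toC a) th) = tseries (fun n => - (2 * fsin a n)) (fun n => 2 * fcos a n) th.
Proof.
  unfold Hil, CSeries, tseries. cbn [Im snd]. apply Series_ext; intros n.
  destruct (fcoef_real n) as [E1 E2]. rewrite E1, E2, cexpi_neg_mul.
  unfold cexpi, Cmult, Cminus, Cplus, Copp, RtoC. cbn [Re Im fst snd]. ring.
Qed.

Lemma rhs_real_part th :
  fst (Cplus (Copp (Cmult (RtoC (a th)) (Lam (toC a) th))) (Cmult (Hil (toC a) th) (Dop (toC a) th)))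
  = - (a th * tseries (fun n => 2 * (INR n * fcos a n)) (fun n => 2 * (INR n * fsin a n)) th)
    + tseries (fun n => - (2 * fsin a n)) (fun n => 2 * fcos a n) th * Derive a th.
Proof.
  rewrite Lam_real, <- Hil_imag.
  unfold Dop, CDerive, toC, Cplus, Copp, Cmult, RtoC. cbn [fst snd Re Im].
  rewrite Derive_const. change (fun t => a t) with a. ring.
Qed.

End RealProfile.

Section PositivePart.
Variable a : R -> R.
Hypothesis Hc : forall x, continuous a x.
Hypothesis Hsum : abs_summable (fcos a) (fsin a).

Lemma pos_part_real th :
  pos_part (toC a) th =
    (tseries (halve_const (fcos a)) (fsin a) th, tseries (fun n => - fsin a n) (fcos a) th).
Proof.
  rewrite (tseries_first_term _ _ (abs_summable_halve _ _ Hsum)),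
    (tseries_first_term _ _ (abs_summable_conj _ _ Hsum)).
  unfold pos_part, CSeries. change 0%Z with (Z.of_nat 0).
  destruct (fcoef_real a Hc 0) as [E0 _]. rewrite E0, fsin_0.
  unfold halve_const; cbn [Nat.eqb]. unfold Cplus, Cmult, RtoC. cbn [Re Im fst snd].
  f_equal; f_equal; [field| |ring|]; apply Series_ext; intros m;
    destruct (fcoef_real a Hc (S m)) as [E1 _]; rewrite E1; unfold cexpi; cbn [fst snd]; ring.
Qed.

Lemma fcoef_pos_part p :
  fcoef (pos_part (toC a)) (Z.of_nat (S p)) = (fcos a (S p), - fsin a (S p)) /\
  fcoef (pos_part (toC a)) (- Z.of_nat (S p)) = (0, 0).
Proof.
  assert (Hre := abs_summable_halve _ _ Hsum). assert (Him := abs_summable_conj _ _ Hsum).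
  destruct (fcoef_of_trig_integrals (pos_part (toC a)) (S p) (PI * fcos a (S p)) (PI * fcos a (S p))
              (PI * - fsin a (S p)) (PI * fsin a (S p))) as [E1 E2];
    try (eapply is_RInt_fun_eq; [intros x; rewrite pos_part_real; reflexivity|]).
  - exact (tseries_cos_coef _ _ Hre (S p)).
  - exact (tseries_sin_coef _ _ Him (S p)).
  - exact (tseries_cos_coef _ _ Him (S p)).
  - exact (tseries_sin_coef _ _ Hre (S p)).
  - pose proof PI_RGT_0. rewrite E1, E2. split; f_equal; field; lra.
Qed.

Lemma Lam_pos_part th :
  Lam (pos_part (toC a)) th =
    (tseries (fun n => INR n * fcos a n) (fun n => INR n * fsin a n) th,
     tseries (fun n => - (INR n * fsin a n)) (fun n => INR n * fcos a n) th).
Proof.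
  unfold Lam, CSeries, tseries. f_equal; apply Series_ext; intros [|p];
    try (change (INR 0) with 0; unfold Cmult, RtoC; cbn [Re Im fst snd]; ring);
    destruct (fcoef_pos_part p) as [E1 E2]; rewrite E1, E2, cexpi_neg_mul;
    unfold cexpi, Cmult, Cplus, RtoC; cbn [Re Im fst snd]; ring.
Qed.

End PositivePart.

Lemma constant_of_fourier (a : R -> R) :
  (forall x, continuous a x) -> (forall x, a (x + 2 * PI) = a x) ->
  (forall n, (1 <= n)%nat -> fcos a n = 0 /\ fsin a n = 0) ->
  forall th, a th = fcos a 0.
Proof.
  intros Hc Hp Hcoef th. pose proof PI_RGT_0.
  enough (Hg : a th - fcos a 0 = 0) by lra.
  apply (fourier_coefs_zero (fun x => a x - fcos a 0)).
  - intros x. apply (continuous_Rplus a (fun _ => - fcos a 0)); auto using continuous_const.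
  - intros x. rewrite Hp. reflexivity.
  - intros n. split; apply is_RInt_unique.
    + apply (is_RInt_fun_eq (fun x => a x * cos (INR n * x) - fcos a 0 * cos (INR n * x)));
        [intros; ring|].
      eapply is_RInt_val_eq; [|apply is_RInt_Rminus; [apply is_RInt_fcos, Hc
                                                       | apply is_RInt_Rscal, is_RInt_cos_nat]].
      destruct n as [|n]; cbn [Nat.eqb]; [ring|].
      rewrite (proj1 (Hcoef (S n) ltac:(lia))). ring.
    + apply (is_RInt_fun_eq (fun x => a x * sin (INR n * x) - fcos a 0 * sin (INR n * x)));
        [intros; ring|].
      eapply is_RInt_val_eq; [|apply is_RInt_Rminus; [apply is_RInt_fsin, Hc
                                                       | apply is_RInt_Rscal, is_RInt_sin_nat]].
      destruct n as [|n]; [rewrite fsin_0; ring|].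
      rewrite (proj2 (Hcoef (S n) ltac:(lia))). ring.
Qed.

(** The dissipation [S(a) = Σ n (A_n² + B_n²)]; [⟨a, Λa⟩ = 4π S(a)]. *)
Definition dissipation (a : R -> R) : R := Series (fun n => INR n * (fcos a n ^ 2 + fsin a n ^ 2)).

Lemma dissipation_term_nonneg (b : R -> R) n : 0 <= INR n * (fcos b n ^ 2 + fsin b n ^ 2).
Proof.
  apply Rmult_le_pos; [apply pos_INR|].
  pose proof (pow2_ge_0 (fcos b n)). pose proof (pow2_ge_0 (fsin b n)). lra.
Qed.

Section Profile.
Variable a : R -> R.
Hypothesis Ha : periodic_C3 a.

Lemma profile_continuous x : continuous a x.
Proof.
  destruct Ha as [_ [a1 [_ [_ [D0 _]]]]].
  apply (@ex_derive_continuous R_AbsRing R_NormedModule); eexists; apply D0.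
Qed.

Let Hsum := proj1 (fourier_summable a Ha).
Let Hsum1 := proj2 (fourier_summable a Ha).

(** [S(a)] converges: [A_n² + B_n² ≤ 2 sup|a| (|A_n| + |B_n|)]. *)
Lemma ex_series_dissipation : ex_series (fun n => INR n * (fcos a n ^ 2 + fsin a n ^ 2)).
Proof.
  pose proof PI_RGT_0.
  destruct (continuous_bounded a 0 (2 * PI) ltac:(lra) profile_continuous) as [M HM].
  assert (Hb := fun n => fourier_abs_bound a M n profile_continuous HM).
  apply (@ex_series_le R_AbsRing R_CompleteNormedModule _
           (fun n => 2 * M * (Rabs (INR n * fcos a n) + Rabs (INR n * fsin a n)))).
  - intros n. change (Rabs (INR n * (fcos a n ^ 2 + fsin a n ^ 2))
                      <= 2 * M * (Rabs (INR n * fcos a n) + Rabs (INR n * fsin a n))).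
    assert (Hsq : 0 <= fcos a n ^ 2 + fsin a n ^ 2) by nra.
    rewrite (Rabs_pos_eq (INR n * _)) by (apply Rmult_le_pos; [apply pos_INR | exact Hsq]).
    rewrite !Rabs_mult, !(Rabs_pos_eq (INR n)) by apply pos_INR.
    rewrite <- (pow2_abs (fcos a n)), <- (pow2_abs (fsin a n)).
    specialize (Hb n). pose proof (pos_INR n).
    pose proof (Rabs_pos (fcos a n)). pose proof (Rabs_pos (fsin a n)).
    assert (Rabs (fcos a n) ^ 2 + Rabs (fsin a n) ^ 2
            <= (Rabs (fcos a n) + Rabs (fsin a n)) * (2 * M)) by nra.
    replace (2 * M * (INR n * Rabs (fcos a n) + INR n * Rabs (fsin a n)))
      with (INR n * ((Rabs (fcos a n) + Rabs (fsin a n)) * (2 * M))) by ring.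
    apply Rmult_le_compat_l; auto.
  - apply (@ex_series_scal R_AbsRing R_NormedModule). exact Hsum1.
Qed.

Lemma dissipation_nonneg : 0 <= dissipation a.
Proof. apply Series_nonneg; [apply dissipation_term_nonneg | exact ex_series_dissipation]. Qed.

Lemma dissipation_zero_constant : dissipation a = 0 -> forall th, a th = fcos a 0.
Proof.
  intros H0. apply constant_of_fourier; [exact profile_continuous | apply Ha|].
  intros n Hn.
  assert (Hz := Series_nonneg_eq0 _ (dissipation_term_nonneg a) ex_series_dissipation H0 n).
  assert (0 < INR n) by (apply lt_0_INR; lia).
  assert (Hsq : fcos a n ^ 2 + fsin a n ^ 2 = 0) by (apply (Rmult_eq_reg_l (INR n)); lra).
  rewrite <- !Rsqr_pow2 in Hsq. exact (Rplus_sqr_eq_0 _ _ Hsq).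
Qed.

(** First energy identity: [∫ Re(-aΛa + (Ha)(Da)) = -8π S(a)]. Both terms
    contribute [-4π S(a)]; the second one after an integration by parts. *)
Lemma mean_rhs_integral :
  is_RInt (fun th => fst (Cplus (Copp (Cmult (RtoC (a th)) (Lam (toC a) th)))
                                (Cmult (Hil (toC a) th) (Dop (toC a) th))))
    0 (2 * PI) (- (8 * PI) * dissipation a).
Proof.
  pose proof Ha as [Pa [a1 [a2 [a3 [D0 [D1 _]]]]]]. pose proof PI_RGT_0.
  assert (C1 : forall x, continuous a1 x).
  { intros x; apply (@ex_derive_continuous R_AbsRing R_NormedModule); eexists; apply D1. }
  destruct (continuous_bounded a 0 (2 * PI) ltac:(lra) profile_continuous) as [M HM].
  destruct (continuous_bounded a1 0 (2 * PI) ltac:(lra) C1) as [M1 HM1].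
  assert (Htransport := is_RInt_mul_tseries _ _ (abs_summable_scal 2 _ _ Hsum1) a M
    (fun n => 2 * PI * fcos a n) (fun n => 2 * PI * fsin a n) HM
    (fun n => is_RInt_fcos a n profile_continuous) (fun n => is_RInt_fsin a n profile_continuous)).
  assert (Hhilbert := is_RInt_mul_tseries _ _ (abs_summable_conj _ _ (abs_summable_scal 2 _ _ Hsum))
    a1 M1 (fun n => 2 * PI * fcos a1 n) (fun n => 2 * PI * fsin a1 n) HM1
    (fun n => is_RInt_fcos a1 n C1) (fun n => is_RInt_fsin a1 n C1)).
  rewrite (Series_ext _ (fun n => 4 * PI * (INR n * (fcos a n ^ 2 + fsin a n ^ 2))))
    in Htransport by (intros; ring).
  rewrite (Series_ext _ (fun n => - (4 * PI) * (INR n * (fcos a n ^ 2 + fsin a n ^ 2))))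
    in Hhilbert by (intros; rewrite (fcos_derive a a1), (fsin_derive a a1);
                    auto using profile_continuous, periodic_endpoints; ring).
  rewrite !Series_scal_l in Htransport, Hhilbert. fold (dissipation a) in Htransport, Hhilbert.
  apply (is_RInt_fun_eq (fun th => - (a th * tseries (fun n => 2 * (INR n * fcos a n))
                                                      (fun n => 2 * (INR n * fsin a n)) th)
                                   + a1 th * tseries (fun n => - (2 * fsin a n)) (fun n => 2 * fcos a n) th)).
  { intros th. rewrite rhs_real_part by apply profile_continuous.
    rewrite (is_derive_unique _ _ _ (D0 th)). ring. }
  eapply is_RInt_val_eq; [|apply is_RInt_Rplus; [apply is_RInt_Ropp, Htransport | exact Hhilbert]].
  ring.
Qed.

Lemma inner_pos_part_Lam :
  inner (pos_part (toC a)) (Lam (pos_part (toC a))) = (2 * PI * dissipation a, 0).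
Proof.
  set (P1 := tseries (halve_const (fcos a)) (fsin a)).
  set (P2 := tseries (fun n => - fsin a n) (fcos a)).
  set (L1 := tseries (fun n => INR n * fcos a n) (fun n => INR n * fsin a n)).
  set (L2 := tseries (fun n => - (INR n * fsin a n)) (fun n => INR n * fcos a n)).
  assert (HP1 := abs_summable_halve _ _ Hsum). assert (HP2 := abs_summable_conj _ _ Hsum).
  assert (HL2 := abs_summable_conj _ _ Hsum1).
  assert (Hpt : forall th, Cmult (pos_part (toC a) th) (Cconj (Lam (pos_part (toC a)) th))
                = (P1 th * L1 th + P2 th * L2 th, P2 th * L1 th - P1 th * L2 th)).
  { intros th. rewrite pos_part_real, Lam_pos_part by (apply profile_continuous || exact Hsum).
    unfold Cmult, Cconj, P1, P2, L1, L2. cbn [fst snd Re Im]. f_equal; ring. }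
  unfold inner, CInt. f_equal; apply is_RInt_unique.
  - eapply is_RInt_fun_eq; [intros th; rewrite Hpt; reflexivity|].
    eapply is_RInt_val_eq; [|apply is_RInt_Rplus; apply tseries_product; eauto].
    replace (2 * PI * dissipation a) with (PI * dissipation a + PI * dissipation a) by ring.
    unfold dissipation. rewrite <- Series_scal_l.
    f_equal; apply Series_ext; intros [|n]; cbn [halve_const Nat.eqb];
      try (change (INR 0) with 0); ring.
  - eapply is_RInt_fun_eq; [intros th; rewrite Hpt; reflexivity|].
    eapply is_RInt_val_eq; [|apply is_RInt_Rminus; apply tseries_product; eauto].
    replace 0 with (Series (fun _ : nat => 0) - Series (fun _ : nat => 0)) by (rewrite Series_zero; ring).
    f_equal; apply Series_ext; intros [|n]; cbn [halve_const Nat.eqb];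
      try (change (INR 0) with 0); ring.
Qed.

End Profile.

Lemma continuous2_at_snd (f : R -> R -> R) x y : continuous2_at f x y -> continuous (fun v => f x v) y.
Proof.
  intros H.
  apply (filterlim_comp _ _ _ (fun v => (x, v)) (fun p => f (fst p) (snd p)) (locally y) (locally (x, y)));
    auto.
  intros P [eps HP]. exists eps. intros v Hv. apply HP. split; [apply ball_center | exact Hv].
Qed.

Lemma smooth_on_profile (J : R -> Prop) (alpha : R -> R -> R) :
  smooth_on J alpha -> (forall t th, J t -> alpha t (th + 2 * PI) = alpha t th) ->
  forall t, J t -> periodic_C3 (alpha t).
Proof.
  intros Hs Hper t Jt. split; [intros; apply Hper, Jt|].
  destruct (Hs 4%nat) as [_ [_ [fy [_ [Dy [_ Hfy]]]]]].
  destruct Hfy as [_ [_ [gy [_ [Dgy [_ Hgy]]]]]].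
  destruct Hgy as [_ [_ [hy [_ [Dhy [_ [Chy _]]]]]]].
  exists (fy t), (gy t), (hy t).
  split; [|split; [|split]]; intros x; auto. apply continuous2_at_snd, Chy, Jt.
Qed.

Lemma smooth_on_time_derivative (J : R -> Prop) (alpha : R -> R -> R) : smooth_on J alpha ->
  exists fx : R -> R -> R,
    (forall x y, J x -> is_derive (fun t => alpha t y) x (fx x y)) /\
    (forall x y, J x -> continuous2_at fx x y) /\
    (forall x y, J x -> continuous2_at alpha x y).
Proof.
  intros Hs. destruct (Hs 1%nat) as [C0 [fx [_ [Dx [_ [Cx _]]]]]].
  exists fx. auto.
Qed.

Lemma derive_mean (J : R -> Prop) (alpha : R -> R -> R) t : open J -> smooth_on J alpha -> J t ->
  is_derive (fun s => RInt (fun th => alpha s th) 0 (2 * PI)) t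
            (RInt (fun th => Derive (fun s => alpha s th) t) 0 (2 * PI)).
Proof.
  intros HJ Hs Jt. destruct (smooth_on_time_derivative J alpha Hs) as [fx [Dx [Cx C0]]].
  apply is_derive_RInt_param.
  - apply (filter_imp J); [|apply HJ, Jt]. intros x Jx th _. eexists. apply Dx, Jx.
  - intros th _. apply continuity_2d_pt_filterlim.
    replace (Derive (fun z => alpha z th) t) with (fx t th) by (symmetry; apply is_derive_unique, Dx, Jt).
    apply (filterlim_ext_loc (fun p => fx (fst p) (snd p))); [|apply Cx, Jt].
    destruct (HJ t Jt) as [eps Heps]. exists eps. intros [u v] [Hu _]. simpl.
    symmetry. apply is_derive_unique, Dx, Heps, Hu.
  - apply (filter_imp J); [|apply HJ, Jt]. intros y Jy.
    apply continuous_ex_RInt. intros; apply continuous2_at_snd, C0, Jy.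
Qed.

Lemma nonincreasing_on_interval (I : R -> Prop) (F dF : R -> R) : is_interval I ->
  (forall t, I t -> is_derive F t (dF t)) -> (forall t, I t -> dF t <= 0) ->
  forall t1 t2, I t1 -> I t2 -> t1 <= t2 -> F t2 <= F t1.
Proof.
  intros HI HD Hneg t1 t2 I1 I2 Hle.
  assert (Hbetween : forall x, Rmin t1 t2 <= x <= Rmax t1 t2 -> I x).
  { intros x Hx. rewrite Rmin_left, Rmax_right in Hx by lra. apply (HI t1 x t2); auto. }
  destruct (MVT_gen F t1 t2 dF) as [c [Hc Hmv]].
  - intros x Hx. apply HD, Hbetween. lra.
  - intros x Hx. apply continuity_pt_filterlim.
    apply (@ex_derive_continuous R_AbsRing R_NormedModule). eexists. apply HD, Hbetween, Hx.
  - specialize (Hneg c (Hbetween c Hc)). nra.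
Qed.

Lemma mean_derivative (I J : R -> Prop) (alpha : R -> R -> R) t :
  open J -> (forall t, I t -> J t) -> smooth_on J alpha ->
  (forall t th, J t -> alpha t (th + 2 * PI) = alpha t th) ->
  (forall t th, I t ->
     RtoC (Derive (fun s => alpha s th) t) =
     Cplus (Copp (Cmult (RtoC (alpha t th)) (Lam (toC (alpha t)) th)))
           (Cmult (Hil (toC (alpha t)) th) (Dop (toC (alpha t)) th))) ->
  I t -> is_derive (fun s => RInt (fun th => alpha s th) 0 (2 * PI)) t (- (8 * PI) * dissipation (alpha t)).
Proof.
  intros HJ HIJ Hs Hper Heq It.
  replace (- (8 * PI) * dissipation (alpha t))
    with (RInt (fun th => Derive (fun s => alpha s th) t) 0 (2 * PI)).
  - apply (derive_mean J); auto.
  - apply is_RInt_unique.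
    apply (is_RInt_fun_eq (fun th => fst (Cplus (Copp (Cmult (RtoC (alpha t th)) (Lam (toC (alpha t)) th)))
                                               (Cmult (Hil (toC (alpha t)) th) (Dop (toC (alpha t)) th))))).
    + intros th. rewrite <- Heq by exact It. reflexivity.
    + apply mean_rhs_integral. apply (smooth_on_profile J); auto.
Qed.

Theorem lemma6p2
  (I J : R -> Prop) (alpha : R -> R -> R)
  (HI : is_interval I)
  (HJ : open J) (HIJ : forall t, I t -> J t)
  (Hsmooth : smooth_on J alpha)
  (Hper : forall t th, J t -> alpha t (th + 2 * PI) = alpha t th)
  (Heq : forall t th, I t ->
     RtoC (Derive (fun s => alpha s th) t) =
     Cplus (Copp (Cmult (RtoC (alpha t th)) (Lam (toC (alpha t)) th)))
           (Cmult (Hil (toC (alpha t)) th) (Dop (toC (alpha t)) th))) :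
  let F := fun t => RInt (fun th => alpha t th) 0 (2 * PI) in
  (forall t, I t ->
     ex_derive F t /\
     RtoC (Derive F t) =
       Cmult (RtoC (-4)) (inner (pos_part (toC (alpha t)))
                                (Lam (pos_part (toC (alpha t))))) /\
     Derive F t <= 0) /\
  (forall t1 t2, I t1 -> I t2 -> t1 <= t2 -> F t2 <= F t1) /\
  (forall t, I t -> Derive F t = 0 -> exists c : R, forall th, alpha t th = c).
Proof.
  intros F. pose proof PI_RGT_0.
  assert (Hprofile : forall t, I t -> periodic_C3 (alpha t))
    by (intros t It; apply (smooth_on_profile J); auto).
  assert (HF : forall t, I t -> is_derive F t (- (8 * PI) * dissipation (alpha t)))
    by (intros t It; apply (mean_derivative I J); auto).
  assert (Hneg : forall t, I t -> - (8 * PI) * dissipation (alpha t) <= 0).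
  { intros t It. pose proof (dissipation_nonneg (alpha t) (Hprofile t It)). nra. }
  split; [|split].
  - intros t It. rewrite (is_derive_unique _ _ _ (HF t It)).
    split; [eexists; apply HF, It|]. split; [|apply Hneg, It].
    rewrite inner_pos_part_Lam by apply Hprofile, It.
    unfold RtoC, Cmult. cbn [fst snd]. f_equal; ring.
  - exact (nonincreasing_on_interval I F _ HI HF Hneg).
  - intros t It HD. rewrite (is_derive_unique _ _ _ (HF t It)) in HD.
    exists (fcos (alpha t) 0). apply dissipation_zero_constant; [apply Hprofile, It|]. nra.
Qed.
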